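(* For $1\le t\le m$, any deterministic voting rule that takes top-$t$ preference profiles as input and has bounded utilitarian distortion has metric distortion $\Omega(m-t+1)$.
   Context: Setting: $n$ agents, $m$ alternatives; each agent has an underlying strict ranking, but the rule only receives each agent's ordered list of her top $t$ alternatives (a top-$t$ profile $\vec\sigma_t$). A full profile extends $\vec\sigma_t$ if each agent's top-$t$ prefix coincides with that in $\vec\sigma_t$. Metric framework: a pseudometric $d$ on agents and alternatives is consistent with a full profile $\vec\sigma$ if $X\succ_iY\Rightarrow d(i,X)\le d(i,Y)$, and consistent with $\vec\sigma_t$ if it is consistent with some full profile extending $\vec\sigma_t$. $\mathrm{SC}(X,d)=\sum_id(i,X)$. Metric distortion of a (top-$t$) rule $f$: $\sup_{\vec\sigma_t}\sup_{d}\mathbb E_{X\sim f(\vec\sigma_t)}[\mathrm{SC}(X,d)]/\min_X\mathrm{SC}(X,d)$ over consistent $d$. Utilitarian framework: unit-sum nonnegative utilities $u_i$ ($\sum_Xu_i(X)=1$), consistent with a full profile if $X\succ_iY\Rightarrow u_i(X)\ge u_i(Y)$ and with $\vec\sigma_t$ if consistent with some full extension. $\mathrm{SW}(X,\vec u)=\sum_iu_i(X)$. Utilitarian distortion: $\sup_{\vec\sigma_t}\sup_{\vec u}\max_X\mathrm{SW}(X,\vec u)/\mathbb E_{X\sim f(\vec\sigma_t)}[\mathrm{SW}(X,\vec u)]$; it is bounded if finite. *)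

From HB Require Import structures.
From mathcomp Require Import all_boot all_order all_algebra all_fingroup.
From mathcomp Require Import reals.
Set Implicit Arguments. Unset Strict Implicit. Unset Printing Implicit Defensive.
Import Order.TTheory GRing.Theory Num.Theory.
Local Open Scope ring_scope.

(* Agents are 'I_n, alternatives are 'I_m. *)

(* A full profile: agent i's ranking is a permutation; (s i) k is the
   alternative she ranks in position k (position 0 = top). *)
Definition full_profile (n m : nat) := 'I_n -> {perm 'I_m}.

Definition prefers n m (s : full_profile n m) (i : 'I_n) (X Y : 'I_m) : bool :=
  ((s i)^-1%g X < (s i)^-1%g Y)%N.

(* A top-t profile: agent i's ordered list of her top t alternatives;
   (st i) k is the alternative in position k. *)
Definition topt_profile (n m t : nat) := 'I_n -> 'I_t -> 'I_m.

Definition extends n m t (s : full_profile n m) (st : topt_profile n m t) : Prop :=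
  forall (i : 'I_n) (k : 'I_t) (k' : 'I_m), val k = val k' -> s i k' = st i k.

Definition topt_rule (m t : nat) := forall n : nat, topt_profile n m t -> 'I_m.

Definition point (n m : nat) := ('I_n + 'I_m)%type.

Definition is_pseudometric (R : realType) (T : Type) (d : T -> T -> R) : Prop :=
  (forall x, d x x = 0) /\
  (forall x y, 0 <= d x y) /\
  (forall x y, d x y = d y x) /\
  (forall x y z, d x z <= d x y + d y z).

Definition dist (R : realType) n m (d : point n m -> point n m -> R) (i : 'I_n) (X : 'I_m) : R :=
  d (inl i) (inr X).

Definition metric_consistent (R : realType) n m (d : point n m -> point n m -> R)
    (s : full_profile n m) : Prop :=
  is_pseudometric d /\
  forall i X Y, prefers s i X Y -> dist d i X <= dist d i Y.

Definition metric_consistent_t (R : realType) n m t (d : point n m -> point n m -> R)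
    (st : topt_profile n m t) : Prop :=
  exists s : full_profile n m, extends s st /\ metric_consistent d s.

Definition SC (R : realType) n m (X : 'I_m) (d : point n m -> point n m -> R) : R :=
  \sum_(i < n) dist d i X.

(* The metric distortion of f is at most D (sup of the ratio <= D,
   with ratio = +oo when the optimum is 0 but f's cost is positive). *)
Definition metric_distortion_le (R : realType) m t (f : topt_rule m t) (D : R) : Prop :=
  forall (n : nat) (st : topt_profile n m t) (d : point n m -> point n m -> R),
    metric_consistent_t d st ->
    forall X : 'I_m, SC (f n st) d <= D * SC X d.

Definition util_consistent (R : realType) n m (u : 'I_n -> 'I_m -> R) (s : full_profile n m) : Prop :=
  (forall i X, 0 <= u i X) /\
  (forall i, \sum_(X < m) u i X = 1) /\
  (forall i X Y, prefers s i X Y -> u i Y <= u i X).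

Definition util_consistent_t (R : realType) n m t (u : 'I_n -> 'I_m -> R)
    (st : topt_profile n m t) : Prop :=
  exists s : full_profile n m, extends s st /\ util_consistent u s.

Definition SW (R : realType) n m (X : 'I_m) (u : 'I_n -> 'I_m -> R) : R := \sum_(i < n) u i X.

Definition util_distortion_le (R : realType) m t (f : topt_rule m t) (B : R) : Prop :=
  forall (n : nat) (st : topt_profile n m t) (u : 'I_n -> 'I_m -> R),
    util_consistent_t u st ->
    forall X : 'I_m, SW X u <= B * SW (f n st) u.

Definition util_bounded (R : realType) m t (f : topt_rule m t) : Prop :=
  exists B : R, util_distortion_le f B.

From HB Require Import structures.
From mathcomp Require Import all_boot all_order all_algebra all_fingroup.
From mathcomp Require Import reals.
From mathcomp Require Import zify lra.
Import Order.TTheory GRing.Theory Num.Theory.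
Local Open Scope ring_scope.

Set Implicit Arguments.
Unset Strict Implicit.
Unset Printing Implicit Defensive.

(* Fix m >= 1 alternatives and 1 <= t <= m, and use
   n = m - t + 1 agents.  Agent 0 ranks alternative 0 first; agent j >= 1
   swaps alternative 0 with alternative j + t - 1, which she ranks first
   while alternative 0 sinks to position j + t - 1 >= t.  Thus the agents'
   top choices are pairwise distinct, and no agent reports another agent's
   top choice in her top-t list.
   - A rule with bounded utilitarian distortion must elect the top choice
     of some agent j0: otherwise the "plurality" utilities (all weight on
     the top choice) give the winner welfare 0 and some alternative welfare
     at least 1.
   - Once an alternative y is outside the top-t of every agent but j0, the
     remaining agents may rank y last; on a line put these agents and all
     alternatives except y at 0, agent j0 at 1 and y at 2.  Then y costs
     2n - 1 while any other alternative costs 1.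
   Hence the metric distortion is at least 2n - 1 >= (m - t + 1) / 2.
   The file first proves the general facts (extensions by prefixes,
   line pseudometrics, the two lower bounds) and then the instance. *)

Lemma sum_indicator (R : realType) (T : finType) (a : T) :
  \sum_(z : T) ((z == a)%:R : R) = 1.
Proof. by rewrite (bigD1 a) //= eqxx big1 ?addr0 // => z /negbTE ->. Qed.

Definition prefix_profile n m t (Htm : (t <= m)%N) (s : full_profile n m) :
  topt_profile n m t := fun i k => s i (widen_ord Htm k).

Lemma prefix_extends n m t (Htm : (t <= m)%N) (s : full_profile n m) :
  extends s (prefix_profile Htm s).
Proof. by move=> i k k' Hk; congr (s i _); apply: val_inj. Qed.

Definition line_metric (R : realType) (T : Type) (h : T -> R) : T -> T -> R :=
  fun p q => `|h p - h q|.

Lemma line_metric_pseudometric (R : realType) (T : Type) (h : T -> R) :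
  is_pseudometric (line_metric h).
Proof.
rewrite /line_metric; split; first by move=> x; rewrite subrr normr0.
split; first by move=> *; apply: normr_ge0.
split; first by move=> *; apply: distrC.
by move=> x y z; apply: ler_distD.
Qed.

(* Utilitarian lower bound: under bounded utilitarian distortion the winner
   is the top choice of some agent (provided there is an agent i0).  The
   witness utilities put all weight on each agent's top choice. *)
Section BoundedUtilitarian.

Variables (R : realType) (n m t : nat).

Definition plurality_utilities (s : full_profile n m.+1) : 'I_n -> 'I_m.+1 -> R :=
  fun i X => (X == s i ord0)%:R.

Lemma plurality_utilities_consistent (s : full_profile n m.+1) :
  util_consistent (plurality_utilities s) s.
Proof.
split; first by move=> i X; apply: ler0n.
split; first by move=> i; apply: sum_indicator.
move=> i X Y; rewrite /prefers /plurality_utilities.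
case: (Y =P s i ord0) => [-> | _]; last by move=> _; apply: ler0n.
by rewrite permK ltn0.
Qed.

Lemma bounded_util_elects_a_top (f : topt_rule m.+1 t) (B : R)
    (st : topt_profile n m.+1 t) (s : full_profile n m.+1) (i0 : 'I_n) :
  extends s st -> util_distortion_le f B -> exists j, s j ord0 = f n st.
Proof.
move=> Hext HB; case: (boolP [exists j, s j ord0 == f n st]).
  by case/existsP=> j /eqP; exists j.
rewrite negb_exists => /forallP Hnone.
have Hu : util_consistent_t (plurality_utilities s) st.
  by exists s; split; [exact: Hext | exact: plurality_utilities_consistent].
have Hwin : SW (f n st) (plurality_utilities s) = 0.
  by apply: big1 => i _; rewrite /plurality_utilities eq_sym (negbTE (Hnone i)).
have Htop : 1 <= SW (s i0 ord0) (plurality_utilities s).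
  rewrite /SW (bigD1 i0) //= /plurality_utilities eqxx lerDl.
  by apply: sumr_ge0 => i _; apply: ler0n.
by have := HB n st _ Hu (s i0 ord0); rewrite Hwin mulr0; lra.
Qed.

End BoundedUtilitarian.

Definition demote m (r : {perm 'I_m.+1}) (y : 'I_m.+1) : {perm 'I_m.+1} :=
  (tperm (r^-1 y) ord_max * r)%g.

Lemma demote_last m (r : {perm 'I_m.+1}) y : (demote r y)^-1%g y = ord_max.
Proof.
have Hmax : demote r y ord_max = y by rewrite permM tpermR permKV.
by apply: (perm_inj (s := demote r y)); rewrite permKV Hmax.
Qed.

Lemma demote_other m (r : {perm 'I_m.+1}) y k :
  k != r^-1%g y -> k != ord_max -> demote r y k = r k.
Proof. by move=> Hy Hmax; rewrite permM tpermD // eq_sym. Qed.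

Section MetricLowerBound.

Variables (R : realType) (n m t : nat) (st : topt_profile n m.+1 t).
Variables (s : full_profile n m.+1) (j0 : 'I_n) (y : 'I_m.+1).
Hypothesis Hext : extends s st.
Hypothesis Hhidden : forall i, i != j0 -> (t <= (s i)^-1%g y)%N.

Definition demoted_profile : full_profile n m.+1 :=
  fun i => if i == j0 then s i else demote (s i) y.

Lemma demoted_extends : extends demoted_profile st.
Proof.
move=> i k k' Hk; rewrite /demoted_profile.
case: eqP => [_ | /eqP Hi]; first exact: Hext.
have Hfar := Hhidden Hi.
have Hle := leq_ord ((s i)^-1%g y).
rewrite demote_other; first exact: Hext.
- by apply/eqP => Hk'; move: (ltn_ord k) Hk Hfar; rewrite Hk' /=; lia.
- by apply/eqP => Hk'; move: (ltn_ord k) Hk Hfar Hle; rewrite Hk' /=; lia.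
Qed.

Definition witness_metric : point n m.+1 -> point n m.+1 -> R :=
  line_metric (fun p => match p with
                        | inl i => (i == j0)%:R
                        | inr X => 2 * (X == y)%:R
                        end).

Lemma witness_dist i X :
  dist witness_metric i X = if i == j0 then 1 else 2 * (X == y)%:R.
Proof.
rewrite /dist /witness_metric /line_metric.
case: (i == j0); case: (X == y) => /=; rewrite ?mulr1 ?mulr0 ?subr0 ?sub0r ?normrN.
- by rewrite (_ : 1 - 2 = - 1 :> R) ?normrN ?normr1 //; lra.
- by rewrite normr1.
- by rewrite ger0_norm //; lra.
- by rewrite normr0.
Qed.

Lemma witness_metric_consistent : metric_consistent_t witness_metric st.
Proof.
exists demoted_profile; split; first exact: demoted_extends.
split; first exact: line_metric_pseudometric.
move=> i X Y; rewrite /prefers !witness_dist /demoted_profile.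
case: (i =P j0) => [_ _ | _]; first by [].
case: (X =P y) => [-> | _]; last by rewrite mulr0 => _; apply: mulr_ge0.
by rewrite demote_last ltnNge leq_ord.
Qed.

Lemma witness_cost_winner : SC y witness_metric = 2 * n%:R - 1.
Proof.
rewrite /SC (eq_bigr (fun i => 2 - (i == j0)%:R)); last first.
  by move=> i _; rewrite witness_dist eqxx; case: (i == j0) => /=; lra.
by rewrite sumrB sumr_const card_ord sum_indicator mulr_natr.
Qed.

Lemma witness_cost_other X : X != y -> SC X witness_metric = 1.
Proof.
move=> HX; rewrite /SC -(sum_indicator R j0); apply: eq_bigr => i _.
by rewrite witness_dist (negbTE HX) mulr0; case: (i == j0).
Qed.

Lemma metric_lower_bound (f : topt_rule m.+1 t) (D : R) :
  f n st = y -> metric_distortion_le f D ->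
  1 <= D /\ (forall X, X != y -> 2 * n%:R - 1 <= D).
Proof.
move=> Hy Hdist; have := Hdist n st _ witness_metric_consistent; rewrite Hy => HD.
split=> [|X HX]; last by have := HD X; rewrite witness_cost_winner witness_cost_other ?mulr1.
have Hpos : 0 < 2 * n%:R - 1 :> R.
  have : (1 <= n)%N := leq_ltn_trans (leq0n j0) (ltn_ord j0).
  by rewrite -(ler_nat R); lra.
by rewrite -(ler_pMl _ Hpos) -witness_cost_winner HD.
Qed.

End MetricLowerBound.

Section HardInstance.

Variables (m t : nat).
Hypothesis Ht1 : (1 <= t)%N.

Local Notation n := (m.+1 - t).+1.

Definition top_alt (j : 'I_n) : 'I_m.+1 :=
  inord (if j == 0 :> nat then 0 else j + (t - 1))%N.

Lemma top_alt_val j : top_alt j = (if j == 0 :> nat then 0 else j + (t - 1))%N :> nat.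
Proof. by rewrite /top_alt /= inordK //; have := ltn_ord j; case: eqP; lia. Qed.

Lemma top_alt_inj : injective top_alt.
Proof.
move=> j1 j2 /(congr1 val) /=; rewrite !top_alt_val => H; apply: val_inj => /=.
by move: H; do 2 case: eqP; lia.
Qed.

Lemma top_alt_zero_or_far j : top_alt j = ord0 \/ (t <= top_alt j)%N.
Proof.
have := top_alt_val j; case: eqP => Hj Hval; first by left; apply: val_inj.
by right; rewrite Hval; lia.
Qed.

Definition hard_ranking : full_profile n m.+1 := fun j => tperm ord0 (top_alt j).

Lemma hard_ranking_top j : hard_ranking j ord0 = top_alt j.
Proof. exact: tpermL. Qed.

Lemma hard_tops_hidden i j : i != j -> (t <= (hard_ranking i)^-1%g (top_alt j))%N.
Proof.
move=> Hij; rewrite tpermV; case: tpermP => [Hj0 | Hji | Hj0 _].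
- have [Hi0 | //] := top_alt_zero_or_far i.
  by case/eqP: Hij; apply: top_alt_inj; rewrite Hi0 Hj0.
- by case/eqP: Hij; apply: top_alt_inj.
- by have [/Hj0 | //] := top_alt_zero_or_far j.
Qed.

End HardInstance.

Theorem mainTheorem8 (R : realType) :
  exists c : R, 0 < c /\
    forall (m t : nat), (1 <= t <= m)%N ->
    forall f : topt_rule m t, util_bounded R f ->
    forall D : R, D < c * (m - t + 1)%:R -> ~ metric_distortion_le f D.
Proof.
exists 2^-1; split; first by rewrite invr_gt0 ltr0n.
move=> m t /andP[Ht1 Htm]; case: m Htm => [|m] Htm; first by lia.
move=> f [B HB] D HD Hdist; rewrite addn1 in HD.
set st := prefix_profile Htm (@hard_ranking m t).
have Hext := prefix_extends Htm (@hard_ranking m t).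
have [j0 Htop] := bounded_util_elects_a_top ord0 Hext HB.
have Hhidden i : i != j0 -> (t <= (@hard_ranking m t i)^-1%g (f _ st))%N.
  by rewrite -Htop hard_ranking_top; apply: hard_tops_hidden.
have [Hone Hother] := metric_lower_bound Hext Hhidden erefl Hdist.
(* With a single alternative only the bound D >= 1 is available, and n = 1. *)
have [Hm0 | Hm] := posnP m.
  by move: HD; rewrite Hm0 (_ : (1 - t).+1 = 1)%N; [rewrite mulr1; lra | lia].
(* Otherwise some alternative X differs from the winner, so D >= 2n - 1 >= n/2. *)
pose X : 'I_m.+1 := if f _ st == ord0 then ord_max else ord0.
have HX : X != f _ st.
  rewrite /X; case: (f _ st =P ord0) => [-> | /eqP]; last by rewrite eq_sym.
  by apply/eqP => /(congr1 val) /=; lia.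
have Hn : 1 <= (m.+1 - t).+1%:R :> R by rewrite ler1n.
by have := Hother X HX; lra.
Qed.
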